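(* For every integer $d\ge 2$, $\lambda(d,2^{d-2})\ge 1-\dfrac{1}{3^{d-1}}$.
   Context: A $d$-subcube of $\{0,1\}^n$ is a set $C\subseteq\{0,1\}^n$ obtained by fixing $n-d$ coordinates to constant values and letting the remaining $d$ coordinates vary arbitrarily; there are $\binom nd 2^{n-d}$ of them. For integers $0\le s\le 2^d$ and $S\subseteq\{0,1\}^n$, let $\Lambda(S,d,s)$ be the number of $d$-subcubes $C$ with $|S\cap C|=s$, let $\Lambda(n,d,s)=\max\{\Lambda(S,d,s): S\subseteq\{0,1\}^n\}$ for $n\ge d$, and let $\lambda(d,s)=\lim_{n\to\infty}\Lambda(n,d,s)/\big(\binom nd 2^{n-d}\big)$ (the limit exists since the ratio is non-increasing in $n$). *)

From HB Require Import structures.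
From mathcomp Require Import all_boot all_order all_algebra.
From mathcomp Require Import all_classical all_reals all_analysis.
Set Implicit Arguments. Unset Strict Implicit. Unset Printing Implicit Defensive.
Import Order.TTheory GRing.Theory Num.Theory.
Import numFieldNormedType.Exports.
Local Open Scope ring_scope.

Definition point (n : nat) := {ffun 'I_n -> bool}.

(* A subcube of {0,1}^n is encoded by c : 'I_n -> option bool:
   c i = Some b means coordinate i is fixed to b, c i = None means it is free.
   This is a bijective encoding of subcubes. *)
Definition cube_code (n : nat) := {ffun 'I_n -> option bool}.

Definition cube_dim n (c : cube_code n) : nat := #|[set i | c i == None]|%N.

Definition in_cube n (c : cube_code n) (x : point n) : bool :=
  [forall i, if c i is Some b then x i == b else true].

Definition LambdaS n (S : {set point n}) (d s : nat) : nat :=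
  #|[set c : cube_code n | (cube_dim c == d) &&
        (#|[set x in S | in_cube c x]| == s)]|.

Definition Lambda (n d s : nat) : nat :=
  \max_(S : {set point n}) LambdaS S d s.

(* the ratio Lambda(n,d,s) / (binom(n,d) 2^(n-d)) (meaningful for n >= d) *)
Definition cube_ratio (R : realType) (d s n : nat) : R :=
  (Lambda n d s)%:R / ('C(n, d) * 2 ^ (n - d))%N%:R.

Definition cube_lambda (R : realType) (d s : nat) : R := limn (cube_ratio R d s).

(* Deleting a fixed coordinate i = b maps the d-subcubes of {0,1}^(n+1) meeting S
   in s points injectively to d-subcubes of {0,1}^n meeting the slice of S in s
   points; averaging over the n+1 coordinates gives
   (n+1-d) Lambda(n+1,d,s) <= 2 (n+1) Lambda(n,d,s), i.e. the ratio is
   nonincreasing for n >= d, hence convergent.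
   For the bound, split the 3m coordinates into blocks B0, B1, B2 of size m and let
   S be the set of points with even parity on B0 u B2 and on B1 u B2.  If a
   d-subcube has free coordinates j1, j2 in different blocks, flipping j1 or j2
   preserves it and shifts the parity pair by two distinct nonzero vectors of
   F_2^2, so its points are equidistributed over the four parity classes and it
   meets S in 2^(d-2) points.  The remaining d-subcubes have all free coordinates
   in one block: there are at most 3 C(m,d) 2^(3m-d) <= 3^(1-d) C(3m,d) 2^(3m-d)
   of them.  Monotonicity transfers the bound from n = 3m to the limit. *)

From Pilot Require Import Defs.
From HB Require Import structures.
From mathcomp Require Import all_boot all_order all_algebra.
From mathcomp Require Import all_classical all_reals all_analysis.
From mathcomp Require Import zify ring.
Import Order.TTheory GRing.Theory Num.Theory.
Import numFieldNormedType.Exports.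
(* Re-imported so that [point] refers to Defs.point, not the analysis library's. *)
Import Pilot.Defs.
Set Implicit Arguments. Unset Strict Implicit. Unset Printing Implicit Defensive.

Section Subcubes.
Variable n : nat.
Implicit Types (c : cube_code n) (F : {set 'I_n}).

Definition free_coords c : {set 'I_n} := [set i | c i == None].

Lemma cube_dimE c : cube_dim c = #|free_coords c|.
Proof. by []. Qed.

Lemma card_in_cube c : #|[set x : point n | in_cube c x]| = 2 ^ cube_dim c.
Proof.
pose pt (X : {set 'I_n}) : point n :=
  [ffun i => if c i is Some b then b else i \in X].
have -> : [set x | in_cube c x] = pt @: powerset (free_coords c).
  apply/setP => x; rewrite inE; apply/idP/imsetP => [/forallP xc | [X _ ->]].
    exists [set i in free_coords c | x i].
      by rewrite powersetE; apply/fintype.subsetP => i; rewrite inE => /andP[].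
    apply/ffunP => i; rewrite ffunE !inE; have := xc i.
    by case: (c i) => [b /eqP|].
  by apply/forallP => i; rewrite ffunE; case: (c i).
rewrite card_in_imset ?card_powerset // => X Y; rewrite !powersetE => sX sY /ffunP ptXY.
apply/setP => i; have := ptXY i; rewrite !ffunE.
case ci: (c i) => [b|//] _.
have outside (Z : {set 'I_n}) : Z \subset free_coords c -> i \notin Z.
  by move=> /fintype.subsetP sZ; apply/negP => /sZ; rewrite inE ci.
by rewrite (negbTE (outside X sX)) (negbTE (outside Y sY)).
Qed.

Lemma card_cube_codes_free F :
  #|[set c | free_coords c == F]| = 2 ^ (n - #|F|).
Proof.
pose code (X : {set 'I_n}) : cube_code n :=
  [ffun i => if i \in F then None else Some (i \in X)].
have -> : [set c | free_coords c == F] = code @: powerset (~: F).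
  apply/setP => c; rewrite inE; apply/eqP/imsetP => [cF | [X _ ->]].
    exists [set i | c i == Some true].
      rewrite powersetE; apply/fintype.subsetP => i.
      by rewrite -cF !inE; case: (c i).
    by apply/ffunP => i; rewrite ffunE -cF !inE; case: (c i) => [[]|].
  by apply/setP => i; rewrite !inE ffunE; case: (i \in F).
rewrite card_in_imset ?card_powerset; last first.
  move=> X Y; rewrite !powersetE => sX sY /ffunP codeXY.
  apply/setP => i; have := codeXY i; rewrite !ffunE.
  case iF: (i \in F); last by case.
  have outside (Z : {set 'I_n}) : Z \subset ~: F -> i \notin Z.
    by move=> /fintype.subsetP sZ; apply/negP => /sZ; rewrite inE iF.
  by rewrite (negbTE (outside X sX)) (negbTE (outside Y sY)).
by rewrite (cardsCs (~: F)) finset.setCK card_ord.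
Qed.

Lemma card_cube_codes_pred (P : pred {set 'I_n}) :
  #|[set c | P (free_coords c)]| = \sum_(F | P F) 2 ^ (n - #|F|).
Proof.
rewrite -sum1dep_card (partition_big (@free_coords) P) //=.
apply: eq_bigr => F PF; rewrite -card_cube_codes_free -sum1dep_card.
by apply: eq_bigl => c; case: eqP => [->|]; rewrite ?PF ?andbF.
Qed.

Lemma card_cube_codes_sub d (P : {set 'I_n}) :
  #|[set c | (cube_dim c == d) && (free_coords c \subset P)]|
    = 'C(#|P|, d) * 2 ^ (n - d).
Proof.
rewrite (card_cube_codes_pred (fun F => (#|F| == d) && (F \subset P))).
rewrite (eq_bigr (fun _ => 2 ^ (n - d))) => [|F /andP[/eqP -> _] //].
rewrite sum_nat_const -cardsE -cards_draws; congr (_ * _).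
by apply: eq_card => F; rewrite !inE andbC.
Qed.

Lemma card_cube_codes_dim d :
  #|[set c : cube_code n | cube_dim c == d]| = 'C(n, d) * 2 ^ (n - d).
Proof.
rewrite -[n in 'C(n, d)](card_ord n) -cardsT -card_cube_codes_sub.
by apply: eq_card => c; rewrite !inE finset.subsetT andbT.
Qed.
End Subcubes.

Definition cubes_meeting n (S : {set point n}) (d s : nat) : {set cube_code n} :=
  [set c | (cube_dim c == d) && (#|[set x in S | in_cube c x]| == s)].

Lemma LambdaSE n (S : {set point n}) d s : LambdaS S d s = #|cubes_meeting S d s|.
Proof. by []. Qed.

Lemma LambdaS_le_Lambda n (S : {set point n}) d s : LambdaS S d s <= Lambda n d s.
Proof. exact: (@leq_bigmax _ (fun S => LambdaS S d s)). Qed.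

Lemma Lambda_attained n d s : exists S : {set point n}, Lambda n d s = LambdaS S d s.
Proof.
by eexists; rewrite /Lambda (bigop.bigmax_eq_arg (finset.set0 : {set point n})).
Qed.

Section Slices.
Variables (n : nat) (i : 'I_n.+1) (b : bool).

Definition point_ins (y : point n) : point n.+1 :=
  [ffun j => if unlift i j is Some k then y k else b].
Definition point_del (x : point n.+1) : point n := [ffun k => x (lift i k)].
Definition code_del (c : cube_code n.+1) : cube_code n := [ffun k => c (lift i k)].
Definition slice (S : {set point n.+1}) : {set point n} := [set y | point_ins y \in S].

Lemma point_ins_inj : injective point_ins.
Proof.
move=> y y' /ffunP yy'; apply/ffunP => k.
by have := yy' (lift i k); rewrite !ffunE liftK.
Qed.

Lemma code_del_inj (c c' : cube_code n.+1) :
  c i = c' i -> code_del c = code_del c' -> c = c'.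
Proof.
move=> cc'i /ffunP cc'; apply/ffunP => j.
by case: (unliftP i j) => [k ->|->] //; have := cc' k; rewrite !ffunE.
Qed.

Variable c : cube_code n.+1.
Hypothesis ci : c i = Some b.

Lemma free_coords_code_del : free_coords c = lift i @: free_coords (code_del c).
Proof.
apply/setP => j; case: (unliftP i j) => [k ->|->].
  by rewrite mem_imset ?inE ?ffunE //; exact: lift_inj.
rewrite !inE ci /=; apply/esym/imsetP => [[k _ /eqP]].
by rewrite (negbTE (neq_lift i k)).
Qed.

Lemma cube_dim_code_del : cube_dim (code_del c) = cube_dim c.
Proof. by rewrite !cube_dimE free_coords_code_del card_imset //; exact: lift_inj. Qed.

Lemma in_cube_point_ins y : in_cube c (point_ins y) = in_cube (code_del c) y.
Proof.
apply/forallP/forallP => [yc k | yc j].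
  by have := yc (lift i k); rewrite !ffunE liftK.
rewrite ffunE; case: (unliftP i j) => [k ->|->]; last by rewrite ci.
by have := yc k; rewrite ffunE.
Qed.

Lemma point_delK x : in_cube c x -> point_ins (point_del x) = x.
Proof.
move=> /forallP xc; apply/ffunP => j; rewrite !ffunE.
case: (unliftP i j) => [k ->|->]; first by rewrite ffunE.
by have := xc i; rewrite ci => /eqP.
Qed.

Lemma card_slice_meet (S : {set point n.+1}) :
  #|[set y in slice S | in_cube (code_del c) y]| = #|[set x in S | in_cube c x]|.
Proof.
suff -> : [set x in S | in_cube c x] =
          point_ins @: [set y in slice S | in_cube (code_del c) y].
  by rewrite card_imset //; exact: point_ins_inj.
apply/setP => x; rewrite inE; apply/andP/idP => [[xS xc] | /imsetP[y]].
  rewrite -(point_delK xc) mem_imset; last exact: point_ins_inj.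
  by rewrite !inE -in_cube_point_ins point_delK ?xS.
by rewrite !inE -in_cube_point_ins => /andP[yS yc] ->.
Qed.

End Slices.

Lemma card_fixed_cubes_meeting n (i : 'I_n.+1) b (S : {set point n.+1}) d s :
  #|[set c in cubes_meeting S d s | c i == Some b]| <= Lambda n d s.
Proof.
have := LambdaS_le_Lambda (slice i b S) d s; apply: leq_trans.
rewrite -(card_in_imset (f := code_del i)); last first.
  move=> c c'; rewrite !inE => /andP[_ /eqP ci] /andP[_ /eqP c'i].
  by apply: code_del_inj; rewrite ci c'i.
apply/subset_leq_card/fintype.subsetP => _ /imsetP[c + ->].
rewrite !inE => /andP[/andP[/eqP dc /eqP sc] /eqP ci].
by rewrite (cube_dim_code_del ci) (card_slice_meet ci) dc sc !eqxx.
Qed.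

Lemma sum_card_fixed n d (G : {set cube_code n}) :
  {in G, forall c, cube_dim c = d} ->
  (n - d) * #|G| = \sum_(i < n) #|[set c in G | c i != None]|.
Proof.
move=> dimG.
have fixedE c : c \in G -> #|[set i | c i != None]| = n - d.
  move=> /dimG <-; rewrite cube_dimE -[X in X - _](card_ord n).
  rewrite -(cardsC (free_coords c)) addKn.
  by apply: eq_card => i; rewrite !inE.
rewrite mulnC -sum1_card big_distrl /=.
under eq_bigr => c cG do rewrite mul1n -(fixedE c cG) -sum1dep_card.
rewrite (exchange_big_dep xpredT) //=; apply: eq_bigr => i _.
by rewrite -sum1_card; apply: eq_bigl => c; rewrite !inE.
Qed.

Lemma Lambda_succ n d s : (n.+1 - d) * Lambda n.+1 d s <= 2 * n.+1 * Lambda n d s.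
Proof.
have [S ->] := Lambda_attained n.+1 d s.
rewrite LambdaSE (@sum_card_fixed _ d); last first.
  by move=> c; rewrite inE => /andP[/eqP].
apply: (@leq_trans (\sum_(i < n.+1) 2 * Lambda n d s)); last first.
  by rewrite sum_nat_const card_ord mulnCA mulnA.
apply: leq_sum => i _; rewrite mul2n -addnn.
set G := cubes_meeting S d s.
have fixed_split : [set c in G | c i != None] \subset
    [set c in G | c i == Some false] :|: [set c in G | c i == Some true].
  apply/fintype.subsetP => c; rewrite !inE.
  by case: (c i) => [[]|]; rewrite ?andbF ?orbF.
apply: leq_trans (subset_leq_card fixed_split) _.
apply: leq_trans (leq_card_setU _ _).1 _.
by apply: leq_add; apply: card_fixed_cubes_meeting.
Qed.

Definition parity n (A : {set 'I_n}) (x : point n) : bool :=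
  \big[addb/false]_(i in A) x i.

Definition flip n (j : 'I_n) (x : point n) : point n := [ffun i => (i == j) (+) x i].

Lemma flipK n (j : 'I_n) : involutive (flip j).
Proof. by move=> x; apply/ffunP => i; rewrite !ffunE addbA addbb. Qed.

Lemma parity_flip n (A : {set 'I_n}) j x : parity A (flip j x) = parity A x (+) (j \in A).
Proof.
rewrite /parity (eq_bigr _ (fun i _ => ffunE _ i)) big_split /= addbC; congr addb.
rewrite big_mkcond (eq_bigr (fun i => if i == j then i \in A else false)).
  by rewrite -big_mkcond big_pred1_eq.
by move=> i _; case: (i \in A); case: eqP.
Qed.

Lemma in_cube_flip n (c : cube_code n) j x :
  c j = None -> in_cube c (flip j x) = in_cube c x.
Proof.
move=> cj; apply: eq_forallb => i; rewrite ffunE.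
by case: eqP => [->|_] //; rewrite cj.
Qed.

Definition addb2 (v w : bool * bool) : bool * bool := (v.1 (+) w.1, v.2 (+) w.2).

Lemma addb2K w : involutive (addb2^~ w).
Proof. by move=> v; rewrite /addb2 /= -!addbA !addbb !addbF; case: v. Qed.

Lemma add0b2 v : addb2 (false, false) v = v.
Proof. by case: v. Qed.

Lemma addb2_cases v u w :
  u != (false, false) -> w != (false, false) -> u != w ->
  [\/ v = (false, false), v = u, v = w | v = addb2 u w].
Proof.
by case: v u w => [[] []] [[] []] [[] []] //= _ _ _;
  first [exact: Or41 | exact: Or42 | exact: Or43 | exact: Or44].
Qed.

Section Fibers.
Variables (T : finType) (U : {set T}) (r : T -> bool * bool).

Definition fiber (v : bool * bool) : {set T} := [set x in U | r x == v].

Lemma card_fiber_shift (h : T -> T) w :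
  injective h -> (forall x, (h x \in U) = (x \in U)) ->
  (forall x, r (h x) = addb2 (r x) w) ->
  forall v, #|fiber (addb2 v w)| = #|fiber v|.
Proof.
move=> h_inj hU hr v; rewrite -(card_preimset _ h_inj); apply: eq_card => x.
by rewrite !inE hU hr (inj_eq (inv_inj (addb2K w))).
Qed.

Lemma card_fibers : #|U| = \sum_(v : bool * bool) #|fiber v|.
Proof.
rewrite -sum1_card (partition_big r xpredT) //=; apply: eq_bigr => v _.
by rewrite -sum1dep_card.
Qed.

Lemma card_fiber0 (f g : T -> T) u w :
  injective f -> (forall x, (f x \in U) = (x \in U)) ->
  (forall x, r (f x) = addb2 (r x) u) ->
  injective g -> (forall x, (g x \in U) = (x \in U)) ->
  (forall x, r (g x) = addb2 (r x) w) ->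
  u != (false, false) -> w != (false, false) -> u != w ->
  #|U| = 4 * #|fiber (false, false)|.
Proof.
move=> f_inj fU fr g_inj gU gr u0 w0 uw.
have shift_u := card_fiber_shift f_inj fU fr.
have shift_w := card_fiber_shift g_inj gU gr.
rewrite card_fibers (eq_bigr (fun _ => #|fiber (false, false)|)).
  by rewrite sum_nat_const card_prod card_bool.
move=> v _; case: (addb2_cases v u0 w0 uw) => -> //.
- by rewrite -[u]add0b2 shift_u.
- by rewrite -[w]add0b2 shift_w.
- by rewrite shift_w -[u]add0b2 shift_u.
Qed.

End Fibers.

Lemma expn_ffact_le k m d : 0 < k -> k ^ d * m ^_ d <= (k * m) ^_ d.
Proof.
move=> k_gt0; rewrite !ffact_prod -[d in k ^ d]card_ord -prod_nat_const -big_split /=.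
apply: leq_prod => i _; rewrite mulnBr leq_sub2l // leq_pmull //.
Qed.

Lemma expn_bin_le k m d : 0 < k -> k ^ d * 'C(m, d) <= 'C(k * m, d).
Proof.
by move=> k_gt0; rewrite -(leq_pmul2r (fact_gt0 d)) -mulnA !bin_ffact expn_ffact_le.
Qed.

Section ThreeBlocks.
Variable m : nat.
Local Notation n := (3 * m).

Definition block (k : nat) : {set 'I_n} := [set j : 'I_n | j %/ m == k].

Definition block_parities (x : point n) : bool * bool :=
  (parity (~: block 1) x, parity (~: block 0) x).

Definition three_block_set : {set point n} :=
  [set x | block_parities x == (false, false)].

Definition block_shift (k : nat) : bool * bool := (k != 1, k != 0).

Lemma block_parities_flip j x :
  block_parities (flip j x) = addb2 (block_parities x) (block_shift (j %/ m)).
Proof. by rewrite /block_parities !parity_flip !inE. Qed.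

Hypothesis m_gt0 : 0 < m.

Lemma block_lt3 (j : 'I_n) : j %/ m < 3.
Proof. by rewrite ltn_divLR // mulnC ltn_ord. Qed.

Lemma card_block k : #|block k| <= m.
Proof.
pose rem (j : 'I_n) : 'I_m := Ordinal (ltn_pmod j m_gt0).
rewrite -(card_in_imset (f := rem)) => [|j j'].
  by rewrite -[m in _ <= m]card_ord max_card.
rewrite !inE => /eqP jk /eqP j'k /(congr1 val) /= jj'.
by apply: val_inj; rewrite /= (divn_eq j m) (divn_eq j' m) jk j'k jj'.
Qed.

Lemma card_meet_three_block_set (c : cube_code n) d :
  2 <= d -> cube_dim c = d -> (forall k, k < 3 -> ~~ (free_coords c \subset block k)) ->
  #|[set x in three_block_set | in_cube c x]| = 2 ^ (d - 2).
Proof.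
move=> d_ge2 dim_c spread.
have /set0Pn[j1 j1c] : free_coords c != finset.set0.
  by rewrite -card_gt0 -cube_dimE dim_c; lia.
have /subsetPn[j2 j2c j2_out] := spread _ (block_lt3 j1).
set C := [set x | in_cube c x].
have free_flip j : j \in free_coords c -> forall x, (flip j x \in C) = (x \in C).
  by rewrite inE => /eqP cj x; rewrite !inE in_cube_flip.
have shift_neq0 (j : 'I_n) : block_shift (j %/ m) != (false, false).
  by rewrite /block_shift; case: (j %/ m) => [|[|]].
have shift12 : block_shift (j1 %/ m) != block_shift (j2 %/ m).
  move: j2_out (block_lt3 j1) (block_lt3 j2); rewrite inE eq_sym /block_shift.
  by case: (j1 %/ m) => [|[|[|]]]; case: (j2 %/ m) => [|[|[|]]].
have := card_fiber0 (inv_inj (flipK j1)) (free_flip j1 j1c) (block_parities_flip j1)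
  (inv_inj (flipK j2)) (free_flip j2 j2c) (block_parities_flip j2)
  (shift_neq0 j1) (shift_neq0 j2) shift12.
have -> : fiber C block_parities (false, false)
          = [set x in three_block_set | in_cube c x].
  by apply/setP => x; rewrite !inE andbC.
rewrite card_in_cube dim_c -{1}(subnKC d_ge2) expnD => /eqP.
by rewrite eqn_pmul2l // => /eqP ->.
Qed.

Lemma card_block_cubes d k :
  #|[set c : cube_code n | (cube_dim c == d) && (free_coords c \subset block k)]|
    <= 'C(m, d) * 2 ^ (n - d).
Proof. by rewrite card_cube_codes_sub leq_mul2r leq_bin2l ?card_block ?orbT. Qed.

Lemma card_cubes_le_three_block d : 2 <= d ->
  'C(n, d) * 2 ^ (n - d)
    <= LambdaS three_block_set d (2 ^ (d - 2)) + 3 * ('C(m, d) * 2 ^ (n - d)).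
Proof.
move=> d_ge2.
pose B k := [set c : cube_code n | (cube_dim c == d) && (free_coords c \subset block k)].
have cover : [set c : cube_code n | cube_dim c == d] \subset
    cubes_meeting three_block_set d (2 ^ (d - 2)) :|: (B 0 :|: B 1 :|: B 2).
  apply/fintype.subsetP => c; rewrite !inE => dim_c; rewrite dim_c /=; apply/or3P.
  have [in0|out0] := boolP (free_coords c \subset block 0); first by apply/Or32/orP; left.
  have [in1|out1] := boolP (free_coords c \subset block 1); first by apply/Or32/orP; right.
  have [in2|out2] := boolP (free_coords c \subset block 2); first exact: Or33.
  apply/Or31/eqP/(card_meet_three_block_set d_ge2 (eqP dim_c)).
  by case=> [|[|[|]]].
have -> : 3 * ('C(m, d) * 2 ^ (n - d)) = 'C(m, d) * 2 ^ (n - d) * (1 + 1 + 1).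
  by lia.
rewrite -card_cube_codes_dim LambdaSE !mulnDr muln1.
apply: leq_trans (subset_leq_card cover) _.
apply: leq_trans (leq_card_setU _ _).1 _; rewrite leq_add2l.
apply: leq_trans (leq_card_setU _ _).1 (leq_add _ (card_block_cubes d 2)).
apply: leq_trans (leq_card_setU _ _).1 _.
exact: leq_add (card_block_cubes d 0) (card_block_cubes d 1).
Qed.

Lemma Lambda_ge_three_block d : 2 <= d ->
  (3 ^ (d - 1) - 1) * ('C(n, d) * 2 ^ (n - d))
    <= 3 ^ (d - 1) * Lambda n d (2 ^ (d - 2)).
Proof.
move=> d_ge2; have count := card_cubes_le_three_block d_ge2.
have binom : 3 ^ (d - 1) * 3 * 'C(m, d) <= 'C(n, d).
  by rewrite -expnSr subn1 prednK ?(ltnW d_ge2) // expn_bin_le.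
rewrite mulnBl mul1n leq_subLR.
apply: leq_trans (leq_mul (leqnn _) count) _.
rewrite mulnDr addnC leq_add //; first by rewrite !mulnA leq_mul2r binom orbT.
by rewrite leq_mul2l LambdaS_le_Lambda orbT.
Qed.
End ThreeBlocks.

Lemma card_subcubes_succ n d : d <= n ->
  (n.+1 - d) * ('C(n.+1, d) * 2 ^ (n.+1 - d)) = 2 * n.+1 * ('C(n, d) * 2 ^ (n - d)).
Proof.
move=> dn; have := mul_bin_down n.+1 d; rewrite subSn // expnS => binE.
by rewrite mulnA -binE; ring.
Qed.

Local Open Scope ring_scope.

Section Ratio.
Variables (R : realType) (d s : nat).
Local Notation ratio := (cube_ratio R d s).

Lemma cube_ratio_ge0 n : 0 <= ratio n.
Proof. by rewrite /cube_ratio divr_ge0. Qed.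

Lemma cube_ratio_succ n : (d <= n)%N -> ratio n.+1 <= ratio n.
Proof.
move=> dn; have N_gt0 k : (d <= k)%N -> (0 < 'C(k, d) * 2 ^ (k - d))%N.
  by move=> dk; rewrite muln_gt0 bin_gt0 dk expn_gt0.
rewrite /cube_ratio ler_pdivrMr ?ltr0n ?N_gt0 ?(leqW dn) //.
rewrite mulrAC ler_pdivlMr ?ltr0n ?N_gt0 // -!natrM ler_nat.
rewrite -(@leq_pmul2l (n.+1 - d)) ?subn_gt0 // mulnA.
apply: leq_trans (leq_mul (Lambda_succ n d s) (leqnn _)) _.
by rewrite [X in (_ <= X)%N]mulnCA card_subcubes_succ // mulnAC mulnC.
Qed.

Lemma cube_ratio_le n p : (d <= n <= p)%N -> ratio p <= ratio n.
Proof.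
case/andP=> dn /subnK <-; elim: (p - n)%N => [|k IH]; first by rewrite add0n.
by apply: le_trans IH; rewrite addSn cube_ratio_succ // (leq_trans dn) ?leq_addl.
Qed.

Lemma cvgn_cube_ratio : cvgn ratio.
Proof.
apply: (@near_nonincreasing_is_cvgn _ _ 0); last exact: nearW cube_ratio_ge0.
by exists d => // n /= dn p np; rewrite cube_ratio_le ?dn.
Qed.

End Ratio.

Lemma cube_ratio_ge_three_block (R : realType) d m :
  (2 <= d)%N -> (0 < m)%N -> (d <= 3 * m)%N ->
  1 - 1 / 3%:R ^+ (d - 1) <= cube_ratio R d (2 ^ (d - 2)) (3 * m).
Proof.
move=> d_ge2 m_gt0 dm.
have N_gt0 : (0 < 'C(3 * m, d) * 2 ^ (3 * m - d))%N.
  by rewrite muln_gt0 bin_gt0 dm expn_gt0.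
have pow_gt0 : (0 < 3 ^ (d - 1))%N by rewrite expn_gt0.
have -> : 1 - 1 / 3%:R ^+ (d - 1) = (3 ^ (d - 1) - 1)%N%:R / (3 ^ (d - 1))%N%:R :> R.
  by rewrite natrB // natrX mulrBl divff // expf_neq0 // pnatr_eq0.
rewrite /cube_ratio ler_pdivrMr ?ltr0n // mulrAC ler_pdivlMr ?ltr0n // -!natrM ler_nat.
by rewrite [X in (_ <= X)%N]mulnC Lambda_ge_three_block.
Qed.

Theorem mainTheorem4 (R : realType) (d : nat) (hd : (2 <= d)%N) :
  cvgn (cube_ratio R d (2 ^ (d - 2))) /\
  1 - 1 / 3%:R ^+ (d - 1) <= cube_lambda R d (2 ^ (d - 2)).
Proof.
split; first exact: cvgn_cube_ratio.
apply: limr_ge; first exact: cvgn_cube_ratio.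
exists d => // n /= dn.
have [n_gt0 dn3] : (0 < n)%N /\ (d <= 3 * n)%N by split; lia.
apply: le_trans (cube_ratio_ge_three_block R hd n_gt0 dn3) (cube_ratio_le R _ _).
by rewrite dn /=; lia.
Qed.
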